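(* With $d$, $k$, TT-cores $\mathcal{G}_i\in\mathbb{R}^{r_{i-1}\times n_i\times r_i}$ ($r_0=r_d=1$), CountSketch matrices $S_i\in\mathbb{R}^{m\times n_i}$ ($i\ne k$), and TensorSketch matrices $S_{<k}$, $S_{>k}$ as described in the context, the following hold (for $2\le k$ in the first identity and $k\le d-1$ in the second): $$FS_{<k}G_{<k}=\Big[(\mathcal{G}_1\times_2FS_1)\star(\mathcal{G}_2\times_2FS_2)\star\cdots\star(\mathcal{G}_{k-1}\times_2FS_{k-1})\Big]^{\mathrm{L}},$$ $$FS_{>k}G_{>k}^\top=\Big[\Big((\mathcal{G}_{k+1}\times_2FS_{k+1})\star(\mathcal{G}_{k+2}\times_2FS_{k+2})\star\cdots\star(\mathcal{G}_d\times_2FS_d)\Big)^{\mathrm{R}}\Big]^\top,$$ where $F\in\mathbb{C}^{m\times m}$ is the Fourier transform matrix and $^\top$ is the (non-conjugate) transpose.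
   Context: Notation: $[n]=\{1,\dots,n\}$. Index convention: a tuple $(i_1,\dots,i_p)\in[n_{j_1}]\times\cdots\times[n_{j_p}]$ is identified with $1+\sum_{s=1}^p(i_s-1)\prod_{t<s}n_{j_t}$. For $i\in[d]\setminus\{k\}$, $h_i:[n_i]\to[m]$, $v_i:[n_i]\to\{-1,1\}$ are arbitrary and $S_i\in\mathbb{R}^{m\times n_i}$ is the CountSketch matrix $S_i(j,l)=v_i(l)$ if $j=h_i(l)$, else $0$. $S_{<k}$ (resp. $S_{>k}$) is the TensorSketch matrix built from $\{(h_i,v_i)\}_{i<k}$ (resp. $i>k$): for a family $(h_{j_1},v_{j_1}),\dots,(h_{j_p},v_{j_p})$ it is $S(j,i)=v(i)$ if $j=h(i)$ and $0$ otherwise, where for $i\leftrightarrow(i_1,\dots,i_p)$, $h(i)=\big(\sum_s(h_{j_s}(i_s)-1)\bmod m\big)+1$ and $v(i)=\prod_s v_{j_s}(i_s)$. For $\mathcal{G}\in\mathbb{C}^{a\times n\times b}$, $\mathcal{G}(i)=\mathcal{G}(:,i,:)\in\mathbb{C}^{a\times b}$. $G_{<k}\in\mathbb{R}^{n_1\cdots n_{k-1}\times r_{k-1}}$ has row indexed by $(i_1,\dots,i_{k-1})$ equal to $\mathcal{G}_1(i_1)\cdots\mathcal{G}_{k-1}(i_{k-1})$; $G_{>k}\in\mathbb{R}^{r_k\times n_{k+1}\cdots n_d}$ has column indexed by $(i_{k+1},\dots,i_d)$ equal to $\mathcal{G}_{k+1}(i_{k+1})\cdots\mathcal{G}_d(i_d)$.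 Mode-2 product: for $\mathcal{G}\in\mathbb{C}^{a\times n\times b}$ and $M\in\mathbb{C}^{m\times n}$, $(\mathcal{G}\times_2M)(i_1,j,i_3)=\sum_{l=1}^n\mathcal{G}(i_1,l,i_3)M(j,l)$, a tensor of size $a\times m\times b$. Slice-wise product: for $\mathcal{A}\in\mathbb{C}^{r_1\times m\times r_2}$, $\mathcal{B}\in\mathbb{C}^{r_2\times m\times r_3}$, $\mathcal{A}\star\mathcal{B}\in\mathbb{C}^{r_1\times m\times r_3}$ with $(\mathcal{A}\star\mathcal{B})(i)=\mathcal{A}(i)\mathcal{B}(i)$ for all $i\in[m]$. Left unfolding of $\mathcal{A}\in\mathbb{C}^{n_1\times n_2\times n_3}$: $\mathcal{A}^{\mathrm L}\in\mathbb{C}^{n_1n_2\times n_3}$, $\mathcal{A}^{\mathrm L}(i_1+(i_2-1)n_1,i_3)=\mathcal{A}(i_1,i_2,i_3)$. Right unfolding: $\mathcal{A}^{\mathrm R}\in\mathbb{C}^{n_1\times n_2n_3}$, $\mathcal{A}^{\mathrm R}(i_1,i_2+(i_3-1)n_2)=\mathcal{A}(i_1,i_2,i_3)$. Fourier transform matrix: $F(s,j)=w^{(s-1)(j-1)}$, $w=e^{-\mathbf{i}2\pi/m}$. *)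

From HB Require Import structures.
From mathcomp Require Import all_boot all_order all_algebra.
From mathcomp Require Import all_classical all_reals all_analysis.
From mathcomp Require Import complex.
Set Implicit Arguments. Unset Strict Implicit. Unset Printing Implicit Defensive.
Import Order.TTheory GRing.Theory Num.Theory.
Local Open Scope ring_scope.

(* Conventions: everything is 0-based.  An index l of [n] (paper: l in 1..n)
   is an ordinal l : 'I_n (paper index = l+1).
   Third-order tensors A in K^{a x n x b} are represented by their slices:
   A : 'I_n -> 'M[K]_(a,b), with A(i1,i2,i3) = A i2 i1 i3. *)
Definition tensor (K : Type) (a n b : nat) := 'I_n -> 'M[K]_(a, b).

(* total application of f : 'I_N -> X to a natural number (default x0 when
   l >= N; only ever used with l < N). *)
Definition fat (N : nat) (X : Type) (x0 : X) (f : 'I_N -> X) (l : nat) : X :=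
  oapp f x0 (insub l).

Definition top_row (K : pzRingType) p q (A : 'M[K]_(p, q)) : 'rV[K]_q :=
  \row_c (oapp (fun x : 'I_p => A x c) 0 (insub 0%N)).
Definition left_col (K : pzRingType) p q (A : 'M[K]_(p, q)) : 'cV[K]_p :=
  \col_c (oapp (fun y : 'I_q => A c y) 0 (insub 0%N)).

Definition Ntot (n : nat -> nat) (a b : nat) : nat := \prod_(a <= t < b) n t.
(* 0-based flat index j <-> tuple with j = sum_s i_s * prod_{a<=t<s} n_t,
   i.e. the paper's identification 1 + sum_s (i_s - 1) prod_{t<s} n_{j_t};
   digit n a s j is the (0-based) component i_s of the tuple encoded by j. *)
Definition digit (n : nat -> nat) (a s j : nat) : nat :=
  ((j %/ \prod_(a <= t < s) n t) %% n s)%N.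

Definition countsketch (K : pzRingType) (m N : nat) (h : 'I_N -> 'I_m)
  (v : 'I_N -> K) : 'M[K]_(m, N) :=
  \matrix_(x, l) (if x == h l then v l else 0).

(* TensorSketch built from the family (h_a,v_a), ..., (h_{b-1},v_{b-1}):
   S(x, j) = v(j) if x = h(j), where for j <-> (i_a,...,i_{b-1})
   h(j) = (sum_s h_s(i_s)) mod m  and  v(j) = prod_s v_s(i_s)   (0-based). *)
Definition tensorsketch (K : pzRingType) (m : nat) (n : nat -> nat)
  (h : forall i, 'I_(n i) -> 'I_m) (v : forall i, 'I_(n i) -> K) (a b : nat)
  : 'M[K]_(m, Ntot n a b) :=
  \matrix_(x, j)
    (if (x == (\sum_(a <= s < b) fat 0%N (fun l => nat_of_ord (h s l)) (digit n a s j)) %% m :> nat)%N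
     then \prod_(a <= s < b) fat 0 (v s) (digit n a s j) else 0).

Fixpoint mxpre (K : pzRingType) (r : nat -> nat)
  (C : forall i, 'M[K]_(r i.-1, r i)) (s : nat) : 'M[K]_(r 0%N, r s) :=
  match s with
  | 0 => 1%:M
  | s'.+1 => mxpre C s' *m C s'.+1
  end.
Fixpoint mxsuf (K : pzRingType) (r : nat -> nat)
  (C : forall i, 'M[K]_(r i.-1, r i)) (a c : nat) : 'M[K]_(r a, r (c + a)) :=
  match c with
  | 0 => 1%:M
  | c'.+1 => mxsuf C a c' *m C (c'.+1 + a)%N
  end.

(* G_{<k}: rows indexed by (i_1,...,i_{k-1}), row = G_1(i_1) ... G_{k-1}(i_{k-1})
   (a 1 x r_{k-1} matrix since r_0 = 1) *)
Definition Gpre (K : pzRingType) (n r : nat -> nat)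
  (G : forall i, tensor K (r i.-1) (n i) (r i)) (k : nat)
  : 'M[K]_(Ntot n 1 k, r k.-1) :=
  \matrix_(j, c)
    top_row (mxpre (fun i => fat 0 (G i) (digit n 1 i j)) k.-1) 0 c.
(* G_{>k}: columns indexed by (i_{k+1},...,i_d), column =
   G_{k+1}(i_{k+1}) ... G_d(i_d)  (an r_k x 1 matrix since r_d = 1) *)
Definition Gsuf (K : pzRingType) (n r : nat -> nat)
  (G : forall i, tensor K (r i.-1) (n i) (r i)) (d k : nat)
  : 'M[K]_(r k, Ntot n k.+1 d.+1) :=
  \matrix_(c, j)
    left_col (mxsuf (fun i => fat 0 (G i) (digit n k.+1 i j)) k (d - k)) c 0.

Definition mode2 (K : pzRingType) a n b mm (A : tensor K a n b)
  (M : 'M[K]_(mm, n)) : tensor K a mm b :=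
  fun j => \sum_(l < n) M j l *: A l.
Definition star (K : pzRingType) a b c mm (A : tensor K a mm b)
  (B : tensor K b mm c) : tensor K a mm c :=
  fun i => A i *m B i.
Fixpoint tpre (K : pzRingType) (r : nat -> nat) mm
  (T : forall i, tensor K (r i.-1) mm (r i)) (s : nat) : tensor K (r 0%N) mm (r s) :=
  match s with
  | 0 => fun _ => 1%:M
  | s'.+1 => star (tpre T s') (T s'.+1)
  end.
Fixpoint tsuf (K : pzRingType) (r : nat -> nat) mm
  (T : forall i, tensor K (r i.-1) mm (r i)) (a c : nat) : tensor K (r a) mm (r (c + a)) :=
  match c with
  | 0 => fun _ => 1%:M
  | c'.+1 => star (tsuf T a c') (T (c'.+1 + a)%N)
  end.

Lemma ltn_mod_mul n1 n2 (p : 'I_(n1 * n2)) : (p %% n1 < n1)%N.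
Proof.
case: n1 p => [|n1] p; last by rewrite ltn_mod.
by case: p => /= x; rewrite mul0n.
Qed.
Lemma ltn_div_mul n1 n2 (p : 'I_(n1 * n2)) : (p %/ n1 < n2)%N.
Proof.
case: n1 p => [|n1] p; first by case: p => /= x; rewrite mul0n.
have := ltn_ord p; rewrite ltn_divLR // [(n2 * _)%N]mulnC; exact.
Qed.
Definition lo n1 n2 (p : 'I_(n1 * n2)) : 'I_n1 := Ordinal (ltn_mod_mul p).
Definition hi n1 n2 (p : 'I_(n1 * n2)) : 'I_n2 := Ordinal (ltn_div_mul p).

(* left unfolding: A^L(i1 + i2 n1, i3) = A(i1,i2,i3)  (0-based) *)
Definition lunf (K : pzRingType) n1 n2 n3 (A : tensor K n1 n2 n3)
  : 'M[K]_(n1 * n2, n3) :=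
  \matrix_(p, c) A (hi p) (lo p) c.
(* right unfolding: A^R(i1, i2 + i3 n2) = A(i1,i2,i3)  (0-based) *)
Definition runf (K : pzRingType) n1 n2 n3 (A : tensor K n1 n2 n3)
  : 'M[K]_(n1, n2 * n3) :=
  \matrix_(i, q) A (lo q) i (hi q).

Definition fourier (R : realType) (m : nat) : 'M[R[i]]_m :=
  \matrix_(s, j) ((cos (2 * pi / m%:R)) -i* (sin (2 * pi / m%:R)))%C ^+ (s * j).

Definition cplx (R : realType) p q (A : 'M[R]_(p, q)) : 'M[R[i]]_(p, q) :=
  map_mx (fun x => x%:C%C) A.
Definition tcplx (R : realType) a n b (A : tensor R a n b) : tensor R[i] a n b :=
  fun l => cplx (A l).

Definition sketched_core (R : realType) (m : nat) (n r : nat -> nat)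
  (G : forall i, tensor R (r i.-1) (n i) (r i))
  (h : forall i, 'I_(n i) -> 'I_m) (v : forall i, 'I_(n i) -> R) (i : nat)
  : tensor R[i] (r i.-1) m (r i) :=
  mode2 (tcplx (G i)) (fourier R m *m cplx (countsketch (h i) (v i))).

Lemma r0_dim (r : nat -> nat) (m : nat) : r 0%N = 1%N -> (r 0%N * m = m)%N.
Proof. by move=> ->; rewrite mul1n. Qed.
Lemma rd_dim (r : nat -> nat) (m d k : nat) :
  (k <= d)%N -> r d = 1%N -> (m * r (d - k + k) = m)%N.
Proof. by move=> hk hd; rewrite subnK // hd muln1. Qed.

(* The (s, j) entry of F S_{<k}, where j encodes the tuple (i_1, ..., i_{k-1}),
   is w^(s h(j)) v(j) with h(j) = sum_t h_t(i_t) mod m.  Since w^m = 1 the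
   reduction mod m disappears and the entry factors as the product over t of
   w^(s h_t(i_t)) v_t(i_t) = (F S_t)(s, i_t).  Summing against the rows
   G_1(i_1) ... G_{k-1}(i_{k-1}) of G_{<k} over all tuples then expands the
   product of the sums sum_{i_t} (F S_t)(s, i_t) G_t(i_t), which is exactly the
   s-th slice of the slice-wise product of the sketched cores.  The same
   computation, read from the other end of the train, gives G_{>k}. *)

From HB Require Import structures.
From mathcomp Require Import all_boot all_order all_algebra.
From mathcomp Require Import all_classical all_reals all_analysis.
From mathcomp Require Import complex.
From mathcomp Require Import ring zify.
Set Implicit Arguments.
Unset Strict Implicit.
Unset Printing Implicit Defensive.
Import Order.TTheory GRing.Theory Num.Theory.
Local Open Scope ring_scope.

Lemma fat_ord (X : Type) N (x0 : X) (g : 'I_N -> X) (l : 'I_N) :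
  fat x0 g l = g l.
Proof. by rewrite /fat; case: insubP => [u _ /val_inj -> //|]; rewrite ltn_ord. Qed.

Lemma sum_nat_mul_split (V : nmodType) (F : nat -> V) N p :
  \sum_(0 <= j < N * p) F j = \sum_(0 <= i < p) \sum_(0 <= j < N) F (j + i * N)%N.
Proof.
elim: p => [|p IH]; first by rewrite muln0 !big_geq.
rewrite big_nat_recr //= mulnS addnC (@big_cat_nat _ _ _ (N * p)) ?leq_addr //= IH.
congr (_ + _); rewrite -{1}(add0n (N * p)%N) big_addn addKn.
by apply: eq_big_nat => j _; rewrite mulnC.
Qed.

Lemma Ntot_recr n a b : (a <= b)%N -> Ntot n a b.+1 = (Ntot n a b * n b)%N.
Proof. by move=> hab; rewrite /Ntot big_nat_recr. Qed.

Lemma Ntot_split n a t b : (a <= t < b)%N ->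
  Ntot n a b = (Ntot n a t * n t * Ntot n t.+1 b)%N.
Proof.
case/andP=> hat htb; rewrite /Ntot (@big_cat_nat _ _ _ t) //=; last exact: ltnW.
by rewrite (@big_ltn _ _ _ t) // mulnA.
Qed.

Lemma sum_Ntot_recr (V : nmodType) n a b (F : nat -> V) : (a <= b)%N ->
  \sum_(0 <= j < Ntot n a b.+1) F j
  = \sum_(i < n b) \sum_(j < Ntot n a b) F (j + i * Ntot n a b)%N.
Proof.
move=> hab; rewrite Ntot_recr // sum_nat_mul_split big_mkord.
by apply: eq_bigr => i _; rewrite big_mkord.
Qed.

Lemma digit_low_add n a t b i j : (a <= t < b)%N -> (j < Ntot n a b)%N ->
  digit n a t (j + i * Ntot n a b) = digit n a t j.
Proof.
move=> ht hj; rewrite /digit (@Ntot_split n a t b ht) in hj *.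
have hP : (0 < Ntot n a t)%N by case: (Ntot n a t) hj.
have -> : (j + i * (Ntot n a t * n t * Ntot n t.+1 b) =
  (i * Ntot n t.+1 b * n t) * Ntot n a t + j)%N by ring.
by rewrite divnMDl // modnMDl.
Qed.

Lemma digit_top_add n a b i j : (j < Ntot n a b)%N -> (i < n b)%N ->
  digit n a b (j + i * Ntot n a b) = i.
Proof.
move=> hj hi; rewrite /digit -/(Ntot n a b).
have hP : (0 < Ntot n a b)%N by case: (Ntot n a b) hj.
by rewrite addnC divnMDl // divn_small // addn0 modn_small.
Qed.

Lemma eq_mxpre (K : pzRingType) r (C C' : forall i, 'M[K]_(r i.-1, r i)) p :
  (forall t, (1 <= t <= p)%N -> C t = C' t) -> mxpre C p = mxpre C' p.
Proof.
elim: p => [//|p IH] hC /=.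
rewrite IH ?hC // => [|t /andP[h1 h2]]; first by rewrite leqnn.
by apply: hC; rewrite h1 ltnW.
Qed.

Lemma eq_mxsuf (K : pzRingType) r (C C' : forall i, 'M[K]_(r i.-1, r i)) a c :
  (forall t, (a < t <= c + a)%N -> C t = C' t) -> mxsuf C a c = mxsuf C' a c.
Proof.
elim: c => [//|c IH] hC /=.
rewrite IH ?hC // => [|t /andP[h1 h2]]; first by apply/andP; split; lia.
by apply: hC; apply/andP; split; lia.
Qed.

Section ChainProductExpansion.
Variables (K : comPzRingType) (n r : nat -> nat) (f : nat -> nat -> K).
Variable M : forall t, nat -> 'M[K]_(r t.-1, r t).

Lemma mxpre_distr p :
  \sum_(0 <= j < Ntot n 1 p.+1)
     (\prod_(1 <= t < p.+1) f t (digit n 1 t j)) *: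
       mxpre (fun t => M t (digit n 1 t j)) p
  = mxpre (fun t => \sum_(l < n t) f t l *: M t l) p.
Proof.
elim: p => [|p IH].
  by rewrite /Ntot big_geq // big_nat1 big_geq // scale1r.
rewrite sum_Ntot_recr //= -IH mulmx_suml.
under [RHS]eq_bigr do rewrite mulmx_sumr.
rewrite [RHS]exchange_big /=; apply: eq_bigr => i _.
rewrite big_mkord; apply: eq_bigr => j _.
rewrite big_nat_recr //= digit_top_add //.
rewrite (@eq_big_nat _ _ _ 1 p.+1 _ (fun t => f t (digit n 1 t j))); last first.
  by move=> t ht; rewrite digit_low_add.
rewrite (@eq_mxpre _ r _ (fun t => M t (digit n 1 t j))); last first.
  by move=> t /andP[h1 h2]; rewrite digit_low_add // h1.
by rewrite -scalemxAl -scalemxAr scalerA.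
Qed.

Lemma mxsuf_distr a b : (a <= b)%N ->
  \sum_(0 <= j < Ntot n a.+1 b.+1)
     (\prod_(a.+1 <= t < b.+1) f t (digit n a.+1 t j)) *:
       mxsuf (fun t => M t (digit n a.+1 t j)) a (b - a)
  = mxsuf (fun t => \sum_(l < n t) f t l *: M t l) a (b - a).
Proof.
move=> hab; have [c ->] : exists c, b = (c + a)%N.
  by exists (b - a)%N; rewrite subnK.
rewrite addnK; elim: c => [|c IH].
  by rewrite /Ntot big_geq // big_nat1 big_geq // scale1r.
have hac : (a.+1 <= (c + a).+1)%N by rewrite ltnS leq_addl.
rewrite sum_Ntot_recr //= -IH mulmx_suml.
under [RHS]eq_bigr do rewrite mulmx_sumr.
rewrite [RHS]exchange_big /=; apply: eq_bigr => i _.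
rewrite big_mkord; apply: eq_bigr => j _.
rewrite (@big_nat_recr _ _ _ (c + a).+1) //= digit_top_add //.
rewrite (@eq_big_nat _ _ _ a.+1 (c + a).+1 _ (fun t => f t (digit n a.+1 t j)));
  last first.
  by move=> t ht; rewrite digit_low_add.
rewrite (@eq_mxsuf _ r _ (fun t => M t (digit n a.+1 t j))); last first.
  by move=> t /andP[h1 h2]; rewrite digit_low_add // h1 ltnS.
by rewrite -scalemxAl -scalemxAr scalerA.
Qed.

End ChainProductExpansion.

Lemma de_moivre (R : realType) (a : R) (p : nat) :
  ((cos a) -i* (sin a))%C ^+ p = ((cos (a *+ p)) -i* (sin (a *+ p)))%C.
Proof.
elim: p => [|p IH]; first by rewrite !mulr0n cos0 sin0 expr0 oppr0.
rewrite exprS IH mulrS cosD sinD /=.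
by apply/eqP; rewrite eq_complex /=; apply/andP; split; apply/eqP; ring.
Qed.

Section FourierSketch.
Variables (R : realType) (m : nat).
Hypothesis m_gt0 : (0 < m)%N.

Definition fourier_root : R[i] :=
  ((cos (2 * pi / m%:R)) -i* (sin (2 * pi / m%:R)))%C.

Lemma fourier_root_expm : fourier_root ^+ m = 1.
Proof.
rewrite de_moivre.
have -> : (2 * pi / m%:R) *+ m = pi *+ 2 :> R.
  rewrite -mulr_natr mulrAC -mulrA divff ?mulr1 ?pnatr_eq0 -?lt0n //.
  by rewrite mulr_natl.
by rewrite cos2pi sin2pi oppr0.
Qed.

Lemma fourier_root_exp_modn (s x : nat) :
  fourier_root ^+ (s * (x %% m)) = fourier_root ^+ (s * x).
Proof.
rewrite {2}(divn_eq x m) mulnDr exprD (mulnC (x %/ m)%N) mulnCA.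
rewrite [fourier_root ^+ (m * _)]exprM.
by rewrite fourier_root_expm expr1n mul1r.
Qed.

Definition sketch_entry n (h : forall i, 'I_(n i) -> 'I_m)
    (v : forall i, 'I_(n i) -> R) (s t l : nat) : R[i] :=
  fourier_root ^+ (s * fat 0%N (fun l => nat_of_ord (h t l)) l)
  * (fat 0 (v t) l)%:C%C.
Arguments sketch_entry {n}.

Lemma cplxM p q l (A : 'M[R]_(p, q)) (B : 'M[R]_(q, l)) :
  cplx (A *m B) = cplx A *m cplx B.
Proof. exact: (map_mxM (real_complex R)). Qed.

Lemma cplx_mxpre r (C : forall i, 'M[R]_(r i.-1, r i)) p :
  cplx (mxpre C p) = mxpre (fun t => cplx (C t)) p.
Proof.
elim: p => [|p IH] /=; first exact: (map_mx1 (real_complex R)).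
by rewrite cplxM IH.
Qed.

Lemma cplx_mxsuf r (C : forall i, 'M[R]_(r i.-1, r i)) a c :
  cplx (mxsuf C a c) = mxsuf (fun t => cplx (C t)) a c.
Proof.
elim: c => [|c IH] /=; first exact: (map_mx1 (real_complex R)).
by rewrite cplxM IH.
Qed.

Lemma fourier_countsketchE N (hh : 'I_N -> 'I_m) (vv : 'I_N -> R) s l :
  (fourier R m *m cplx (countsketch hh vv)) s l
  = fourier_root ^+ (s * hh l) * (vv l)%:C%C.
Proof.
rewrite mxE (bigD1 (hh l)) //= big1 ?addr0 => [|x hx]; rewrite !mxE.
  by rewrite eqxx.
by rewrite (negbTE hx) mulr0.
Qed.

Lemma fourier_tensorsketchE n (h : forall i, 'I_(n i) -> 'I_m)
    (v : forall i, 'I_(n i) -> R) a b s (j : 'I_(Ntot n a b)) :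
  (fourier R m *m cplx (tensorsketch h v a b)) s j
  = \prod_(a <= t < b) sketch_entry h v s t (digit n a t j).
Proof.
set H := (\sum_(a <= t < b) fat 0%N (fun l => nat_of_ord (h t l)) (digit n a t j))%N.
rewrite mxE (bigD1 (Ordinal (ltn_pmod H m_gt0))) //= big1 ?addr0 => [|x hx].
  rewrite !mxE eqxx fourier_root_exp_modn /H big_distrr /= expr_sum big_split /=.
  by rewrite (rmorph_prod (real_complex R)).
rewrite !mxE; case: eqP => [hxH|]; last by rewrite mulr0.
by case/eqP: hx; apply: val_inj.
Qed.

End FourierSketch.

Arguments sketch_entry {R m n}.

Lemma sketched_coreE (R : realType) (m : nat) (n r : nat -> nat)
    (G : forall i, tensor R (r i.-1) (n i) (r i))
    (h : forall i, 'I_(n i) -> 'I_m) (v : forall i, 'I_(n i) -> R) s t :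
  sketched_core G h v t s
  = \sum_(l < n t) sketch_entry h v s t l *: cplx (fat 0 (G t) l).
Proof.
rewrite /sketched_core /mode2; apply: eq_bigr => l _.
by rewrite fourier_countsketchE /sketch_entry !fat_ord.
Qed.

Lemma tpreE (K : pzRingType) r mm (T : forall i, tensor K (r i.-1) mm (r i)) p s :
  tpre T p s = mxpre (fun t => T t s) p.
Proof. by elim: p => [|p IH] //=; rewrite /star IH. Qed.

Lemma tsufE (K : pzRingType) r mm (T : forall i, tensor K (r i.-1) mm (r i)) a c s :
  tsuf T a c s = mxsuf (fun t => T t s) a c.
Proof. by elim: c => [|c IH] //=; rewrite /star IH. Qed.

Lemma top_rowE (K : pzRingType) p q (A : 'M[K]_(p, q)) (p_gt0 : (0 < p)%N) c :
  top_row A 0 c = A (Ordinal p_gt0) c.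
Proof.
rewrite /top_row mxE; case: insubP => [u _ hu|]; last by rewrite p_gt0.
by congr (A _ c); apply: val_inj.
Qed.

Lemma left_colE (K : pzRingType) p q (A : 'M[K]_(p, q)) (q_gt0 : (0 < q)%N) c :
  left_col A c 0 = A c (Ordinal q_gt0).
Proof.
rewrite /left_col mxE; case: insubP => [u _ hu|]; last by rewrite q_gt0.
by congr (A c _); apply: val_inj.
Qed.

Lemma lunf_cast1E (K : pzRingType) a mm b (A : tensor K a mm b)
    (e : (a * mm = mm)%N) (a1 : a = 1%N) (a_gt0 : (0 < a)%N) s c :
  castmx (e, erefl) (lunf A) s c = A s (Ordinal a_gt0) c.
Proof.
rewrite castmxE /= mxE cast_ord_id.
by congr (A _ _ c); apply: val_inj; rewrite /= a1 ?divn1 ?modn1.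
Qed.

Lemma runf_cast1E (K : pzRingType) a mm b (A : tensor K a mm b)
    (e : (mm * b = mm)%N) (b_gt0 : (0 < b)%N) s c :
  castmx (e, erefl) (runf A)^T s c = A s c (Ordinal b_gt0).
Proof.
rewrite castmxE /= !mxE cast_ord_id.
by congr (A _ c _); apply: val_inj; rewrite /= ?modn_small ?divn_small.
Qed.

Lemma fourier_tensorsketch_Gpre (R : realType) (m : nat) (n r : nat -> nat)
    (G : forall i, tensor R (r i.-1) (n i) (r i))
    (h : forall i, 'I_(n i) -> 'I_m) (v : forall i, 'I_(n i) -> R)
    (m_gt0 : (0 < m)%N) (hr0 : r 0%N = 1%N) p :
  fourier R m *m cplx (tensorsketch h v 1 p.+1) *m cplx (Gpre G p.+1)
  = castmx (r0_dim m hr0, erefl) (lunf (tpre (sketched_core G h v) p)).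
Proof.
have r0_gt0 : (0 < r 0%N)%N by rewrite hr0.
apply/matrixP => s c; rewrite (lunf_cast1E _ _ hr0 r0_gt0) tpreE.
rewrite (eq_mxpre (C' := fun t => \sum_(l < n t)
           sketch_entry h v s t l *: cplx (fat 0 (G t) l))); last first.
  by move=> t _; exact: sketched_coreE.
rewrite -(@mxpre_distr _ n r _ (fun t l => cplx (fat 0 (G t) l))) big_mkord.
rewrite [LHS]mxE summxE; apply: eq_bigr => j _.
rewrite fourier_tensorsketchE // -cplx_mxpre mxE [in RHS]mxE; congr (_ * _).
by rewrite [in LHS]mxE (top_rowE _ r0_gt0) mxE.
Qed.

Lemma fourier_tensorsketch_Gsuf (R : realType) (m : nat) (n r : nat -> nat)
    (G : forall i, tensor R (r i.-1) (n i) (r i))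
    (h : forall i, 'I_(n i) -> 'I_m) (v : forall i, 'I_(n i) -> R)
    (m_gt0 : (0 < m)%N) d k (hkd : (k <= d)%N) (hrd : r d = 1%N) :
  fourier R m *m cplx (tensorsketch h v k.+1 d.+1) *m (cplx (Gsuf G d k))^T
  = castmx (rd_dim m hkd hrd, erefl)
      ((runf (tsuf (sketched_core G h v) k (d - k)))^T).
Proof.
have rd_gt0 : (0 < r (d - k + k))%N by rewrite subnK ?hrd.
apply/matrixP => s c; rewrite (runf_cast1E _ _ rd_gt0) tsufE.
rewrite (eq_mxsuf (C' := fun t => \sum_(l < n t)
           sketch_entry h v s t l *: cplx (fat 0 (G t) l))); last first.
  by move=> t _; exact: sketched_coreE.
rewrite -(@mxsuf_distr _ n r _ (fun t l => cplx (fat 0 (G t) l))) // big_mkord.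
rewrite [LHS]mxE summxE; apply: eq_bigr => j _.
rewrite fourier_tensorsketchE // -cplx_mxsuf mxE [in RHS]mxE; congr (_ * _).
by rewrite [in LHS]mxE [Gsuf _ _ _ _ _]mxE (left_colE _ rd_gt0) mxE.
Qed.

Theorem theorem2 (R : realType) (d k m : nat) (n r : nat -> nat)
  (G : forall i, tensor R (r i.-1) (n i) (r i))
  (h : forall i, 'I_(n i) -> 'I_m) (v : forall i, 'I_(n i) -> R)
  (hm : (0 < m)%N) (hk : (1 <= k <= d)%N)
  (hr0 : r 0%N = 1%N) (hrd : r d = 1%N)
  (hv : forall i (l : 'I_(n i)), (1 <= i <= d)%N -> i != k ->
          v i l = 1 \/ v i l = -1) :
  ((2 <= k)%N ->
     fourier R m *m cplx (tensorsketch h v 1 k) *m cplx (Gpre G k)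
     = castmx (r0_dim m hr0, erefl)
         (lunf (tpre (sketched_core G h v) k.-1)))
  /\
  ((k <= d - 1)%N ->
     fourier R m *m cplx (tensorsketch h v k.+1 d.+1) *m (cplx (Gsuf G d k))^T
     = castmx (rd_dim m (proj2 (andP hk)) hrd, erefl)
         ((runf (tsuf (sketched_core G h v) k (d - k)))^T)).
Proof.
split=> [|_]; last exact: fourier_tensorsketch_Gsuf.
by clear hv; case: k hk => [//|p] _ _; exact: fourier_tensorsketch_Gpre.
Qed.
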